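(* Let $p\in[1,\infty]$, $d\in\mathbb N$, $m_0:=d$, $m_1\le m_2\le\cdots$ positive integers, $\mathbf W_n\in\mathbb R^{m_n\times m_{n-1}}$ and $\mathbf b_n\in\mathbb R^{m_n}$ for $n\in\mathbb N$. If $\mathbf W_n=\mathbf I_{m_n,m_{n-1}}+\mathbf P_n$ for all $n\ge1$ with $\sum_{n=1}^\infty\|\mathbf P_n\|_p<\infty$, and $\sum_{n=1}^\infty\|\mathbf b_n\|_p<\infty$, then the ReLU networks $\mathcal N_n$ converge pointwise on $[0,1]^d$, i.e. for each $x\in[0,1]^d$ the sequence $\tilde{\mathcal N}_n(x)$ converges in $\ell^p$.
   Context: $\sigma(t)=\max(t,0)$ applied componentwise; $\mathcal N_n(x):=\big(\sigma(\mathbf W_n\cdot+\mathbf b_n)\circ\cdots\circ\sigma(\mathbf W_1\cdot+\mathbf b_1)\big)(x)\in\mathbb R^{m_n}$ for $x\in[0,1]^d$, and $\tilde{\mathcal N}_n(x)\in\ell^p$ is the sequence whose first $m_n$ entries are those of $\mathcal N_n(x)$ and whose remaining entries are $0$. $\|\cdot\|_p$ denotes the $\ell^p$ norm on vectors and the induced operator norm on matrices. For $m'\ge m$, $\mathbf I_{m',m}$ is the $m'\times m$ matrix whose top $m\times m$ block is the identity and whose remaining entries are zero. *)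

From HB Require Import structures.
From mathcomp Require Import all_boot all_order all_algebra.
From mathcomp Require Import all_classical all_reals all_analysis.
Set Implicit Arguments. Unset Strict Implicit. Unset Printing Implicit Defensive.
Import Order.TTheory GRing.Theory Num.Theory.
Local Open Scope ring_scope.

(* Exponent p in [1, oo] is represented as an extended real p : \bar R with
   (1 <= p)%E; p = +oo is the sup-norm case. *)

Definition vnorm {R : realType} (p : \bar R) {n : nat} (v : 'cV[R]_n) : R :=
  match p with
  | r%:E => (\sum_(i < n) `|v i 0| `^ r) `^ r^-1
  | _ => \big[Num.max/0]_(i < n) `|v i 0|
  end.

Definition opnorm {R : realType} (p : \bar R) {m n : nat} (A : 'M[R]_(m, n)) : R :=
  sup [set vnorm p (A *m x) | x in [set x : 'cV[R]_n | vnorm p x <= 1]].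

Definition lpnorm {R : realType} (p : \bar R) (y : nat -> R) : \bar R :=
  match p with
  | r%:E => poweR (\sum_(0 <= i <oo) ((`|y i| `^ r)%:E))%E r^-1
  | _ => ereal_sup [set (`|y i|)%:E | i in [set: nat]]
  end.

Definition Imat {R : realType} (m' m : nat) : 'M[R]_(m', m) :=
  \matrix_(i, j) ((nat_of_ord i == nat_of_ord j)%:R).

Definition relu {R : realType} {k : nat} (v : 'cV[R]_k) : 'cV[R]_k :=
  map_mx (fun t => Num.max t 0) v.

(* N_n(x); W n is the weight W_{n+1} : R^{m_n} -> R^{m_{n+1}}, b n is b_{n+1} *)
Fixpoint network {R : realType} (m : nat -> nat)
  (W : forall n, 'M[R]_(m n.+1, m n)) (b : forall n, 'cV[R]_(m n.+1))
  (x : 'cV[R]_(m 0%N)) (n : nat) : 'cV[R]_(m n) :=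
  match n with
  | 0 => x
  | k.+1 => relu (W k *m network W b x k + b k)
  end.

Definition extend {R : realType} {k : nat} (v : 'cV[R]_k) : nat -> R :=
  fun i => match insub i with Some j => v j 0 | None => 0 end.

From HB Require Import structures.
From mathcomp Require Import all_boot all_order all_algebra.
From mathcomp Require Import all_classical all_reals all_analysis.
From mathcomp Require Import ring lra.
Import Order.TTheory GRing.Theory Num.Theory.
Import numFieldNormedType.Exports.
Local Open Scope classical_set_scope.
Local Open Scope ring_scope.

(* Since [I_{m_{n+1},m_n} N_n(x)] has nonnegative entries and the ReLU is
   1-Lipschitz and fixes nonnegative numbers, the layer increment
   [N_{n+1}(x) - I N_n(x)] has norm at most [|P_n| |N_n(x)| + |b_n|].  The
   identity block is an isometry of the zero-extended sequences, so
   [|N_{n+1}(x)| <= (1 + |P_n|) |N_n(x)| + |b_n|], and a discrete Gronwall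
   inequality bounds [|N_n(x)|] uniformly.  Hence the increments of the
   zero-extended outputs are summable in l^p.  The limit is built
   coordinatewise, and its distance to the n-th output is bounded by the tail
   of the series of increments. *)

Section powR_facts.
Context {R : realType}.
Implicit Types r s x y : R.

Lemma powRVK {r s} : 0 < r -> 0 <= s -> (s `^ r^-1) `^ r = s.
Proof. by move=> r0 s0; rewrite -powRrM mulVf ?gt_eqF // powRr1. Qed.

Lemma powRKV {r s} : 0 < r -> 0 <= s -> (s `^ r) `^ r^-1 = s.
Proof. by move=> r0 s0; rewrite -powRrM mulfV ?gt_eqF // powRr1. Qed.

Lemma ler_powR2r r x y : 0 <= r -> 0 <= x -> x <= y -> x `^ r <= y `^ r.
Proof.
by move=> r0 x0 xy; apply: ge0_ler_powR; rewrite ?nnegrE // (le_trans x0).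
Qed.

Lemma powRV_le r s x : 0 < r -> 0 <= s -> 0 <= x ->
  (s `^ r^-1 <= x) = (s <= x `^ r).
Proof.
move=> r0 s0 x0; apply/idP/idP => h.
  rewrite -(powRVK r0 s0); apply: ler_powR2r => //; [exact: ltW | exact: powR_ge0].
rewrite -(powRKV r0 x0); apply: ler_powR2r => //; by rewrite invr_ge0 ltW.
Qed.

Lemma powR_convex r t x y : 1 <= r -> 0 <= t -> t <= 1 -> 0 <= x -> 0 <= y ->
  (t * x + (1 - t) * y) `^ r <= t * x `^ r + (1 - t) * y `^ r.
Proof.
move=> r1 t0 t1 x0 y0; have := @convex_powR R r r1 (Itv01 t0 t1) x y.
by rewrite !convRE /=; apply; rewrite inE /= in_itv /= andbT.
Qed.

(* Convexity of [t ^ r] at the point [(a + b) / (A + B)], written as the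
   combination of [a / A] and [b / B] with weights [A / (A + B)] and
   [B / (A + B)]. *)
Lemma powRD_le_convex r A B a b : 1 <= r -> 0 < A -> 0 < B -> 0 <= a -> 0 <= b ->
  (a + b) `^ r <=
  (A + B) `^ r * (A / (A + B) * (a / A) `^ r + B / (A + B) * (b / B) `^ r).
Proof.
move=> r1 A0 B0 a0 b0; have AB0 : 0 < A + B by rewrite addr_gt0.
have t0 : 0 <= A / (A + B) by rewrite divr_ge0 // ltW.
have t1 : A / (A + B) <= 1 by rewrite ler_pdivrMr // mul1r lerDl ltW.
have tE : B / (A + B) = 1 - A / (A + B) by field; rewrite gt_eqF.
have aA : 0 <= a / A by rewrite divr_ge0 // ltW.
have bB : 0 <= b / B by rewrite divr_ge0 // ltW.
have -> : a + b = (A + B) * (A / (A + B) * (a / A) + (1 - A / (A + B)) * (b / B)).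
  by field; rewrite !gt_eqF.
have comb0 : 0 <= A / (A + B) * (a / A) + (1 - A / (A + B)) * (b / B).
  by apply: addr_ge0; apply: mulr_ge0; rewrite ?subr_ge0.
rewrite tE powRM ?(ltW AB0) //.
by rewrite ler_wpM2l ?powR_ge0 // powR_convex.
Qed.

End powR_facts.

Section finite_pnorm.
Context {R : realType} {k : nat}.
Implicit Types (r c : R) (f g : 'I_k -> R).

Definition pnorm r f := (\sum_i `|f i| `^ r) `^ r^-1.

Lemma pnorm_ge0 r f : 0 <= pnorm r f.
Proof. exact: powR_ge0. Qed.

Lemma pnorm_powR r f : 0 < r -> pnorm r f `^ r = \sum_i `|f i| `^ r.
Proof. by move=> r0; rewrite powRVK // sumr_ge0 // => i _; rewrite powR_ge0. Qed.

Lemma normr_le_pnorm r f i : 0 < r -> `|f i| <= pnorm r f.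
Proof.
move=> r0; rewrite -(powRKV r0 (normr_ge0 (f i))).
apply: ler_powR2r; [by rewrite invr_ge0 ltW | exact: powR_ge0 |].
by rewrite (bigD1 i) //= lerDl sumr_ge0 // => j _; rewrite powR_ge0.
Qed.

Lemma pnorm_le r f g : 0 < r -> (forall i, `|f i| <= `|g i|) ->
  pnorm r f <= pnorm r g.
Proof.
move=> r0 fg; apply: ler_powR2r; first by rewrite invr_ge0 ltW.
  by rewrite sumr_ge0 // => i _; rewrite powR_ge0.
by apply: ler_sum => i _; apply: ler_powR2r => //; exact: ltW.
Qed.

Lemma pnormZ r c f : 0 < r -> pnorm r (fun i => c * f i) = `|c| * pnorm r f.
Proof.
move=> r0; rewrite /pnorm; under eq_bigr do rewrite normrM powRM //.
rewrite -mulr_sumr powRM ?powR_ge0 ?powRKV //.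
by rewrite sumr_ge0 // => i _; rewrite powR_ge0.
Qed.

Lemma pnorm_eq0 r f : 0 < r -> pnorm r f = 0 -> forall i, f i = 0.
Proof.
move=> r0 f0 i; apply/normr0_eq0/le_anti.
by rewrite normr_ge0 andbT -f0 normr_le_pnorm.
Qed.

Lemma sum_powR_normalized {r f} : 0 < r -> 0 < pnorm r f ->
  \sum_i (`|f i| / pnorm r f) `^ r = 1.
Proof.
move=> r0 f0; have f0' : 0 <= (pnorm r f)^-1 by rewrite invr_ge0 ltW.
rewrite (eq_bigr (fun i => `|f i| `^ r * (pnorm r f)^-1 `^ r)); last first.
  by move=> i _; rewrite powRM.
rewrite -mulr_suml -pnorm_powR // -powRM ?pnorm_ge0 //.
by rewrite mulfV ?gt_eqF // powR1.
Qed.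

Lemma sum_powRD_le {r A B f g} : 1 <= r -> 0 < A -> 0 < B ->
  \sum_i (`|f i| / A) `^ r = 1 -> \sum_i (`|g i| / B) `^ r = 1 ->
  \sum_i `|f i + g i| `^ r <= (A + B) `^ r.
Proof.
move=> r1 A0 B0 fA gB; apply: (@le_trans _ _ (\sum_i (A + B) `^ r *
    (A / (A + B) * (`|f i| / A) `^ r + B / (A + B) * (`|g i| / B) `^ r))).
  apply: ler_sum => i _.
  apply: le_trans (powRD_le_convex _ _ _ _ _ r1 A0 B0 (normr_ge0 (f i)) (normr_ge0 (g i))).
  apply: ler_powR2r; [exact: le_trans r1 | exact: normr_ge0 | exact: ler_normD].
rewrite -mulr_sumr big_split /= -!mulr_sumr fA gB !mulr1 -mulrDl.
by rewrite divff ?gt_eqF ?addr_gt0 // mulr1.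
Qed.

Lemma pnormD_le r f g : 1 <= r ->
  pnorm r (fun i => f i + g i) <= pnorm r f + pnorm r g.
Proof.
move=> r1; have r0 : 0 < r by apply: lt_le_trans r1.
have [f0|f_neq0] := eqVneq (pnorm r f) 0.
  rewrite f0 add0r; apply: pnorm_le => // i.
  by rewrite (pnorm_eq0 _ _ r0 f0) add0r.
have [g0|g_neq0] := eqVneq (pnorm r g) 0.
  rewrite g0 addr0; apply: pnorm_le => // i.
  by rewrite (pnorm_eq0 _ _ r0 g0) addr0.
have fp : 0 < pnorm r f by rewrite lt_def f_neq0 pnorm_ge0.
have gp : 0 < pnorm r g by rewrite lt_def g_neq0 pnorm_ge0.
rewrite powRV_le ?addr_ge0 ?pnorm_ge0 //; last by rewrite sumr_ge0 // => i _; rewrite powR_ge0.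
exact: (sum_powRD_le r1 fp gp (sum_powR_normalized r0 fp) (sum_powR_normalized r0 gp)).
Qed.

End finite_pnorm.

Lemma bigmax0_ge0 {R : realType} k (F : 'I_k -> R) : 0 <= \big[Num.max/0]_i F i.
Proof. by apply/bigmax_geP; left. Qed.

Section vnorm.
Context {R : realType} {p : \bar R}.
Hypothesis p_ge1 : (1 <= p)%E.

Lemma ge1_ereal_cases : (exists2 r : R, 1 <= r & p = r%:E) \/ p = +oo%E.
Proof. by case: p p_ge1 => [r r1| |//]; [left; exists r | right]. Qed.

Lemma vnorm_ge0 {k} (v : 'cV[R]_k) : 0 <= vnorm p v.
Proof.
by case: ge1_ereal_cases => [[r _ ->]|->]; [exact: pnorm_ge0 | exact: bigmax0_ge0].
Qed.

Lemma normr_le_vnorm {k} (v : 'cV[R]_k) i : `|v i 0| <= vnorm p v.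
Proof.
case: ge1_ereal_cases => [[r r1 ->]|->].
  by apply: (normr_le_pnorm _ (fun i => v i 0)); apply: lt_le_trans r1.
exact: (le_bigmax _ (fun i => `|v i 0|)).
Qed.

Lemma vnorm_le {k} (u v : 'cV[R]_k) :
  (forall i, `|u i 0| <= `|v i 0|) -> vnorm p u <= vnorm p v.
Proof.
move=> uv; case: ge1_ereal_cases => [[r r1 ->]|->].
  by apply: (pnorm_le _ (fun i => u i 0) (fun i => v i 0)) => //; apply: lt_le_trans r1.
apply: bigmax_le => [|i _]; first exact: bigmax0_ge0.
exact: le_trans (uv i) (le_bigmax _ (fun i => `|v i 0|) i).
Qed.

Lemma vnormZ_le {k} c (v : 'cV[R]_k) : vnorm p (c *: v) <= `|c| * vnorm p v.
Proof.
case: ge1_ereal_cases => [[r r1 ->]|->].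
  rewrite -(pnormZ _ c (fun i => v i 0)); last exact: lt_le_trans r1.
  apply: (pnorm_le _ (fun i => (c *: v) i 0)) => [|i]; last by rewrite mxE.
  exact: lt_le_trans r1.
apply: bigmax_le => [|i _]; first by rewrite mulr_ge0 // bigmax0_ge0.
by rewrite mxE normrM ler_wpM2l // (le_bigmax _ (fun i => `|v i 0|)).
Qed.

Lemma vnormD_le {k} (u v : 'cV[R]_k) : vnorm p (u + v) <= vnorm p u + vnorm p v.
Proof.
case: ge1_ereal_cases => [[r r1 ->]|->].
  apply: le_trans (pnormD_le _ (fun i => u i 0) (fun i => v i 0) r1).
  apply: (pnorm_le _ (fun i => (u + v) i 0)) => [|i]; last by rewrite mxE.
  exact: lt_le_trans r1.
apply: bigmax_le => [|i _]; first by rewrite addr_ge0 // bigmax0_ge0.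
rewrite mxE (le_trans (ler_normD _ _)) // lerD //;
  exact: (le_bigmax _ (fun i => `|_ i 0|)).
Qed.

Lemma vnorm0 {k} : vnorm p (0 : 'cV[R]_k) = 0.
Proof.
apply/le_anti; rewrite vnorm_ge0 andbT.
by have := vnormZ_le 0 (0 : 'cV[R]_k); rewrite scale0r normr0 mul0r.
Qed.

Lemma vnorm_eq0 {k} (v : 'cV[R]_k) : vnorm p v = 0 -> v = 0.
Proof.
move=> v0; apply/matrixP => i j; rewrite ord1 mxE; apply/normr0_eq0/le_anti.
by rewrite normr_ge0 andbT -v0 normr_le_vnorm.
Qed.

Lemma vnorm_le_const {k} (v : 'cV[R]_k) c : 0 <= c -> (forall i, `|v i 0| <= c) ->
  vnorm p v <= c * vnorm p (const_mx 1 : 'cV[R]_k).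
Proof.
move=> c0 vc; rewrite -{1}(ger0_norm c0); apply: le_trans (vnormZ_le c _).
by apply: vnorm_le => i; rewrite !mxE mulr1 (ger0_norm c0).
Qed.

Lemma opnorm_ub {m n} (A : 'M[R]_(m, n)) : has_ubound
  [set vnorm p (A *m x) | x in [set x : 'cV[R]_n | vnorm p x <= 1]].
Proof.
exists ((\sum_i \sum_j `|A i j|) * vnorm p (const_mx 1 : 'cV[R]_m)).
move=> _ [x /= x1 <-]; apply: vnorm_le_const => [|i].
  by apply: sumr_ge0 => i _; apply: sumr_ge0.
rewrite mxE (le_trans (ler_norm_sum _ _ _)) //.
apply: (@le_trans _ _ (\sum_j `|A i j|)).
  apply: ler_sum => j _; rewrite normrM -{2}(mulr1 `|A i j|) ler_wpM2l //.
  exact: le_trans (normr_le_vnorm x j) x1.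
by rewrite (bigD1 i) //= lerDl; apply: sumr_ge0 => l _; apply: sumr_ge0.
Qed.

Lemma opnorm_ge0 {m n} (A : 'M[R]_(m, n)) : 0 <= opnorm p A.
Proof.
have A0 : [set vnorm p (A *m x) | x in [set x : 'cV[R]_n | vnorm p x <= 1]]
    (vnorm p (A *m 0)) by exists 0 => //=; rewrite vnorm0.
by have := ub_le_sup (opnorm_ub A) A0; rewrite mulmx0 vnorm0.
Qed.

Lemma vnorm_mulmx_le {m n} (A : 'M[R]_(m, n)) (x : 'cV[R]_n) :
  vnorm p (A *m x) <= opnorm p A * vnorm p x.
Proof.
have [x0|x_neq0] := eqVneq (vnorm p x) 0.
  by rewrite x0 (vnorm_eq0 _ x0) mulmx0 vnorm0 mulr0.
have xp : 0 < vnorm p x by rewrite lt_def x_neq0 vnorm_ge0.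
set a := vnorm p x.
have ax1 : vnorm p (a^-1 *: x) <= 1.
  apply: le_trans (vnormZ_le _ _) _.
  by rewrite ger0_norm ?invr_ge0 ?vnorm_ge0 // mulVf ?gt_eqF.
have Aax : vnorm p (A *m (a^-1 *: x)) <= opnorm p A.
  by apply: ub_le_sup; [exact: opnorm_ub | exists (a^-1 *: x)].
have -> : A *m x = a *: (A *m (a^-1 *: x)).
  by rewrite scalemxAr scalerA mulfV ?gt_eqF // scale1r.
apply: le_trans (vnormZ_le _ _) _.
by rewrite ger0_norm ?vnorm_ge0 // mulrC ler_wpM2r // vnorm_ge0.
Qed.

End vnorm.

Section extend.
Context {R : realType} {k : nat}.
Implicit Types v : 'cV[R]_k.

Lemma extend_lt v i (ik : (i < k)%N) : extend v i = v (Ordinal ik) 0.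
Proof. by rewrite /extend insubT. Qed.

Lemma extend_ge v i : (k <= i)%N -> extend v i = 0.
Proof. by move=> ki; rewrite /extend insubF // ltnNge ki. Qed.

Lemma col_extend v : \col_(i < k) extend v i = v.
Proof. by apply/matrixP => i j; rewrite ord1 mxE /extend valK. Qed.

Lemma extendB u v i : extend (u - v) i = extend u i - extend v i.
Proof. by rewrite /extend; case: insubP => [j _ _|_]; rewrite ?mxE ?subr0. Qed.

End extend.

Definition trunc_norm {R : realType} (p : \bar R) K (z : nat -> R) :=
  vnorm p (\col_(i < K) z i).

Section trunc_norm.
Context {R : realType} {p : \bar R}.
Hypothesis p_ge1 : (1 <= p)%E.
Implicit Types (z f g : nat -> R) (K : nat).

Lemma normr_le_trunc_norm K z i : (i < K)%N -> `|z i| <= trunc_norm p K z.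
Proof.
by move=> iK; have := normr_le_vnorm p_ge1 (\col_(i < K) z i) (Ordinal iK); rewrite mxE.
Qed.

Lemma trunc_normD_le K f g :
  trunc_norm p K (fun i => f i + g i) <= trunc_norm p K f + trunc_norm p K g.
Proof.
rewrite /trunc_norm.
have -> : \col_(i < K) (f i + g i) = \col_(i < K) f i + \col_(i < K) g i.
  by apply/matrixP => i j; rewrite !mxE.
exact: vnormD_le.
Qed.

Lemma trunc_norm_le_const K z c : 0 <= c -> (forall i, (i < K)%N -> `|z i| <= c) ->
  trunc_norm p K z <= c * vnorm p (const_mx 1 : 'cV[R]_K).
Proof. by move=> c0 zc; apply: vnorm_le_const => // i; rewrite mxE zc. Qed.

Lemma trunc_norm_le K K' f g :
  (forall i, (i < K)%N -> `|f i| <= `|g i| /\ ((i < K')%N \/ f i = 0)) ->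
  trunc_norm p K f <= trunc_norm p K' g.
Proof.
move=> fg; rewrite /trunc_norm; case: (ge1_ereal_cases p_ge1) => [[r r1 ->]|->].
  have r0 : 0 < r by apply: lt_le_trans r1.
  apply: ler_powR2r; first by rewrite invr_ge0 ltW.
    by rewrite sumr_ge0 // => i _; rewrite powR_ge0.
  under eq_bigr do rewrite mxE.
  under [X in _ <= X]eq_bigr do rewrite mxE.
  rewrite (big_ord_widen (maxn K K') (fun i => `|f i| `^ r)) ?leq_maxl //.
  rewrite (big_ord_widen (maxn K K') (fun i => `|g i| `^ r)) ?leq_maxr //.
  rewrite big_mkcond [X in _ <= X]big_mkcond /=.
  apply: ler_sum => i _; case: ifP => iK; last by case: ifP => _ //; rewrite powR_ge0.
  have [fgi [iK'|->]] := fg i iK.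
    by rewrite iK'; apply: ler_powR2r => //; exact: ltW.
  by rewrite normr0 powR0 ?gt_eqF //; case: ifP => _ //; rewrite powR_ge0.
apply: bigmax_le => [|i _]; first exact: bigmax0_ge0.
rewrite mxE; have [fgi [iK'|->]] := fg i (ltn_ord i).
  apply: le_trans fgi _.
  have := le_bigmax 0 (fun j : 'I_K' => `|(\col_(i < K') g i) j 0|) (Ordinal iK').
  by rewrite mxE.
by rewrite normr0 bigmax0_ge0.
Qed.

Lemma trunc_norm_distrC K f g :
  trunc_norm p K (fun i => f i - g i) = trunc_norm p K (fun i => g i - f i).
Proof.
by apply/le_anti/andP; split; apply: trunc_norm_le => i iK; rewrite distrC; split => //; left.
Qed.

Lemma vnorm_trunc_norm {k} (v : 'cV[R]_k) : vnorm p v = trunc_norm p k (extend v).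
Proof. by rewrite /trunc_norm col_extend. Qed.

Lemma trunc_norm_extend_le {k} (v : 'cV[R]_k) K : trunc_norm p K (extend v) <= vnorm p v.
Proof.
rewrite vnorm_trunc_norm; apply: trunc_norm_le => i _; split => //.
by case: (ltnP i k) => ik; [left | right; exact: extend_ge].
Qed.

Lemma vnorm_extend {k k'} (v : 'cV[R]_k) (w : 'cV[R]_k') :
  extend v =1 extend w -> vnorm p v = vnorm p w.
Proof.
have extend_le k1 k2 (v1 : 'cV[R]_k1) (v2 : 'cV[R]_k2) : extend v1 =1 extend v2 ->
    vnorm p v1 <= vnorm p v2.
  move=> v12; rewrite !vnorm_trunc_norm; apply: trunc_norm_le => i _.
  rewrite v12; split => //; case: (ltnP i k2) => ik2; [by left | right].
  exact: extend_ge.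
by move=> vw; apply/le_anti; rewrite !extend_le.
Qed.

Lemma lpnorm_le z C : 0 <= C -> (forall K, trunc_norm p K z <= C) -> (lpnorm p z <= C%:E)%E.
Proof.
move=> C0 zC; case: (ge1_ereal_cases p_ge1) => [[r r1 pr]|->]; last first.
  apply: ge_ereal_sup => _ [i _ <-]; rewrite lee_fin.
  exact: le_trans (normr_le_trunc_norm _ _ _ (ltnSn i)) (zC i.+1).
have r0 : 0 < r by apply: lt_le_trans r1.
rewrite /trunc_norm pr in zC; rewrite pr /lpnorm.
have sum_le : (\sum_(0 <= i <oo) ((`|z i| `^ r)%:E) <= (C `^ r)%:E)%E.
  apply: lime_le; first by apply: is_cvg_nneseries => n _ _; rewrite lee_fin powR_ge0.
  apply: nearW => K; rewrite sumEFin lee_fin.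
  move: (zC K); rewrite /= powRV_le //; last by rewrite sumr_ge0 // => i _; rewrite powR_ge0.
  by under eq_bigr do rewrite mxE; rewrite big_mkord.
have sum_ge0 : (0 <= \sum_(0 <= i <oo) ((`|z i| `^ r)%:E))%E.
  by apply: nneseries_ge0 => n _ _; rewrite lee_fin powR_ge0.
move: sum_le sum_ge0; case: (\sum_(0 <= i <oo) _)%E => [s| |] //.
by rewrite !lee_fin => sC s0; rewrite powRV_le.
Qed.

End trunc_norm.

Lemma lpnorm_ge0 {R : realType} (p : \bar R) (z : nat -> R) : (0 <= lpnorm p z)%E.
Proof.
case: p => [r| |] /=; first exact: poweR_ge0.
  by apply: le_ereal_sup_tmp; exists `|z 0%N|%:E; [exists 0%N | rewrite lee_fin].
by apply: le_ereal_sup_tmp; exists `|z 0%N|%:E; [exists 0%N | rewrite lee_fin].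
Qed.

Section real_sequences.
Context {R : realType}.
Implicit Types (a c e u : nat -> R).

Lemma lty_nneseries_bounded u : (forall n, 0 <= u n) ->
  (\sum_(0 <= n <oo) (u n)%:E < +oo)%E -> exists C, forall n, \sum_(0 <= k < n) u k <= C.
Proof.
move=> u0 ulty; set S := (\sum_(0 <= n <oo) (u n)%:E)%E in ulty.
have S0 : (0 <= S)%E by apply: nneseries_ge0 => n _ _; rewrite lee_fin.
exists (fine S) => n.
have := @nneseries_lim_ge R (fun k => (u k)%:E) xpredT 0 n (fun k _ _ => u0 k).
by rewrite -/S sumEFin -(@fineK _ S) ?lee_fin // ge0_fin_numE.
Qed.

Lemma discrete_gronwall a c e :
  0 <= a 0%N -> (forall n, 0 <= c n) -> (forall n, 0 <= e n) ->
  (forall n, a n.+1 <= (1 + c n) * a n + e n) ->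
  forall n, a n <= (a 0%N + \sum_(0 <= k < n) e k) * expR (\sum_(0 <= k < n) c k).
Proof.
move=> a0 c0 e0 step; elim=> [|n IH]; first by rewrite !big_nil addr0 expR0 mulr1.
rewrite !big_nat_recr //= expRD.
set S := \sum_(0 <= k < n) e k; set C := \sum_(0 <= k < n) c k.
have S0 : 0 <= a 0%N + S by rewrite addr_ge0 // sumr_ge0.
have C1 : 1 <= expR C.
  by apply: le_trans (expR_ge1Dx C); rewrite lerDl sumr_ge0.
have cE : 1 + c n <= expR (c n) by exact: expR_ge1Dx.
have E1 : 1 <= expR C * expR (c n).
  by rewrite -[1]mulr1 ler_pM // (le_trans _ cE) // lerDl.
have IH_scaled : 0 <= (1 + c n) * ((a 0%N + S) * expR C - a n).
  by rewrite mulr_ge0 ?subr_ge0 // addr_ge0.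
have exp_dominates : 0 <= (a 0%N + S) * expR C * (expR (c n) - (1 + c n)).
  by rewrite !mulr_ge0 ?subr_ge0 ?expR_ge0.
have e_scaled : 0 <= e n * (expR C * expR (c n) - 1) by rewrite mulr_ge0 ?subr_ge0.
have := step n; nra.
Qed.

End real_sequences.

Section summable_increments.
Context {R : realType} {p : \bar R}.
Hypothesis p_ge1 : (1 <= p)%E.
Variables (E : nat -> nat -> R) (d : nat -> R) (C0 C : R).
Hypothesis d_ge0 : forall n, 0 <= d n.
Hypothesis d_sum_le : forall n, \sum_(0 <= k < n) d k <= C.
Hypothesis E0_le : forall K, trunc_norm p K (E 0%N) <= C0.
Hypothesis E_incr : forall n K, trunc_norm p K (fun i => E n.+1 i - E n i) <= d n.

Let S n := \sum_(0 <= k < n) d k.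
Let L := sup (range S).

Let S_nd : nondecreasing_seq S.
Proof. by apply/nondecreasing_seqP => n; rewrite /S big_nat_recr //= lerDl. Qed.

Let S_ub : has_ubound (range S).
Proof. by exists C => _ [n _ <-]; exact: d_sum_le. Qed.

Let S_le_L n : S n <= L.
Proof. by apply: ub_le_sup => //; exists n. Qed.

Lemma trunc_norm_telescope n k K : (n <= k)%N ->
  trunc_norm p K (fun i => E k i - E n i) <= S k - S n.
Proof.
have self j : trunc_norm p K (fun i => E j i - E j i) <= S j - S j.
  rewrite subrr; apply: le_trans (trunc_norm_le_const p_ge1 _ _ _ (lexx 0) _) _.
    by move=> i _; rewrite subrr normr0.
  by rewrite mul0r.
elim: k => [|k IH]; first by rewrite leqn0 => /eqP ->.
rewrite leq_eqVlt ltnS => /orP[/eqP -> // | nk].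
have -> : (fun i => E k.+1 i - E n i) = (fun i => (E k.+1 i - E k i) + (E k i - E n i)).
  by apply/funext => i; rewrite addrA subrK.
apply: le_trans (trunc_normD_le p_ge1 _ _ _) _.
have -> : S k.+1 - S n = d k + (S k - S n) by rewrite /S big_nat_recr //=; ring.
exact: lerD (E_incr k K) (IH nk).
Qed.

Let E_coord_le n k i : (n <= k)%N -> `|E k i - E n i| <= S k - S n.
Proof.
move=> nk; apply: le_trans (trunc_norm_telescope _ _ i.+1 nk).
exact: normr_le_trunc_norm.
Qed.

(* [E k i + S k] is nondecreasing and bounded in [k], hence convergent;
   subtracting [S k] yields the coordinatewise limit. *)
Let y i := sup (range (fun k => E k i + S k)) - L.

Let E_coord_cvg i : (fun k => E k i) @ \oo --> y i.
Proof.
have u_nd : nondecreasing_seq (fun k => E k i + S k).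
  apply/nondecreasing_seqP => k; have := E_coord_le _ _ i (leqnSn k).
  rewrite ler_norml => /andP[+ _]; lra.
have u_ub : has_ubound (range (fun k => E k i + S k)).
  exists (E 0%N i + L + L) => _ [k _ <-]; have := E_coord_le _ _ i (leq0n k).
  rewrite ler_norml => /andP[_ +]; have := S_le_L k; have : 0 <= S 0%N.
    by rewrite /S big_nil.
  lra.
have -> : (fun k => E k i) = (fun k => E k i + S k) - S.
  by apply/funext => k; rewrite /= addrK.
by apply: cvgB => //; exact: nondecreasing_cvgn.
Qed.

Let tail_bound n K : trunc_norm p K (fun i => E n i - y i) <= L - S n.
Proof.
pose c1 := vnorm p (const_mx 1 : 'cV[R]_K).
pose g k := \sum_(i < K) `|E k i - y i|.
have g0 : g @ \oo --> 0.
  have -> : 0 = \sum_(i < K) (0 : R) by rewrite big1.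
  apply: cvg_big => [|i _]; first exact: add_continuous.
  have : (fun k => `|E k i - y i|) @ \oo --> `|y i - y i|.
    by apply: cvg_norm; apply: cvgB => //; exact: cvg_cst.
  by rewrite subrr normr0.
have split_k k : (n <= k)%N -> trunc_norm p K (fun i => E n i - y i) <= (L - S n) + g k * c1.
  move=> nk.
  have -> : (fun i => E n i - y i) = (fun i => (E n i - E k i) + (E k i - y i)).
    by apply/funext => i; rewrite addrA subrK.
  apply: le_trans (trunc_normD_le p_ge1 _ _ _) _; apply: lerD.
    rewrite trunc_norm_distrC //; apply: le_trans (trunc_norm_telescope _ _ K nk) _.
    by rewrite lerD2r.
  apply: (trunc_norm_le_const p_ge1); first exact: sumr_ge0.
  move=> i iK.
  by rewrite /g (bigD1 (Ordinal iK)) //= lerDl sumr_ge0.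
have : (fun k => (L - S n) + g k * c1) @ \oo --> (L - S n) + 0 * c1.
  by apply: cvgD; [exact: cvg_cst | exact: cvgMr_tmp].
rewrite mul0r addr0 => /cvgr_to_ge; apply.
by near=> k; apply: split_k; near: k; exact: nbhs_infty_ge.
Unshelve. all: by end_near.
Qed.

Lemma summable_increments_lp_cvg : exists y : nat -> R, (lpnorm p y < +oo)%E /\
  ((fun n => lpnorm p (fun i => E n i - y i)) @ \oo --> 0%E).
Proof.
have S0 : S 0%N = 0 by rewrite /S big_nil.
exists y; split.
  have LC0 : 0 <= L + C0.
    apply: addr_ge0; first by rewrite -S0 S_le_L.
    exact: le_trans (vnorm_ge0 p_ge1 _) (E0_le 0).
  apply: le_lt_trans (ltry (L + C0)); apply: (lpnorm_le p_ge1) => // K.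
  have -> : y = (fun i => (y i - E 0%N i) + E 0%N i) by apply/funext => i; rewrite subrK.
  apply: le_trans (trunc_normD_le p_ge1 _ _ _) _; apply: lerD => //.
  by rewrite trunc_norm_distrC // -[L]subr0 -S0 tail_bound.
apply: (@squeeze_cvge _ _ _ _ (fun=> 0%E) _ (fun n => (L - S n)%:E)).
- apply: nearW => n; rewrite lpnorm_ge0 /=.
  by apply: (lpnorm_le p_ge1); [rewrite subr_ge0 | exact: tail_bound].
- exact: cvg_cst.
apply: cvg_EFin; first exact: nearW.
have : (fun n => L - S n) @ \oo --> L - L.
  by apply: cvgB; [exact: cvg_cst | exact: nondecreasing_cvgn].
by rewrite subrr.
Qed.

End summable_increments.

Section relu_network.
Context {R : realType}.

Lemma relu_sub_le (a c : R) : 0 <= a -> `|Num.max (a + c) 0 - a| <= `|c|.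
Proof.
move=> a0; case: (boolP (0 <= a + c)) => [ac0|]; first by rewrite max_l // addrC addKr.
by rewrite -ltNge => ac0; rewrite max_r ?ltW // sub0r normrN ger0_norm // ler0_norm; lra.
Qed.

Lemma extend_Imat_mulmx {m' m} (v : 'cV[R]_m) : (m <= m')%N ->
  extend (Imat m' m *m v) =1 extend v.
Proof.
move=> mm' j; have [jm'|m'j] := ltnP j m'; last first.
  by rewrite !extend_ge // (leq_trans mm' m'j).
rewrite extend_lt mxE; have [jm|mj] := ltnP j m.
  rewrite extend_lt (bigD1 (Ordinal jm)) //= big1 ?addr0; first by rewrite mxE eqxx mul1r.
  move=> l; rewrite mxE -(inj_eq val_inj) /= eq_sym => /negbTE->.
  by rewrite mul0r.
rewrite extend_ge // big1 // => l _; rewrite mxE /=.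
by rewrite gtn_eqF ?mul0r // (leq_trans (ltn_ord l)).
Qed.

Lemma Imat_mulmx_ge0 {m' m} (v : 'cV[R]_m) : (forall i, 0 <= v i 0) ->
  forall i, 0 <= (Imat m' m *m v) i 0.
Proof. by move=> v0 i; rewrite mxE sumr_ge0 // => j _; rewrite mxE mulr_ge0. Qed.

Context {p : \bar R} {m : nat -> nat} {W P : forall n, 'M[R]_(m n.+1, m n)}
  {b : forall n, 'cV[R]_(m n.+1)} {x : 'cV[R]_(m 0%N)}.
Hypothesis p_ge1 : (1 <= p)%E.
Hypothesis m_mono : forall n, (m n <= m n.+1)%N.
Hypothesis W_def : forall n, W n = Imat (m n.+1) (m n) + P n.
Hypothesis x_ge0 : forall i, 0 <= x i 0.

Local Notation N := (network W b x).

Lemma network_ge0 n i : 0 <= N n i 0.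
Proof. by case: n i => [|n] i; rewrite ?x_ge0 //= mxE le_max lexx orbT. Qed.

Lemma vnorm_layer_increment_le n :
  vnorm p (N n.+1 - Imat (m n.+1) (m n) *m N n) <=
  opnorm p (P n) * vnorm p (N n) + vnorm p (b n).
Proof.
apply: (@le_trans _ _ (vnorm p (P n *m N n + b n))).
  apply: (vnorm_le p_ge1) => i; rewrite /= W_def mulmxDl -addrA !mxE.
  apply: relu_sub_le.
  by have := Imat_mulmx_ge0 (m' := m n.+1) _ (network_ge0 n) i; rewrite !mxE.
apply: le_trans (vnormD_le p_ge1 _ _) _.
by rewrite lerD2r vnorm_mulmx_le.
Qed.

Lemma trunc_norm_network_increment_le n K :
  trunc_norm p K (fun i => extend (N n.+1) i - extend (N n) i) <=
  opnorm p (P n) * vnorm p (N n) + vnorm p (b n).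
Proof.
apply: le_trans (vnorm_layer_increment_le n).
have -> : (fun i => extend (N n.+1) i - extend (N n) i) =
    extend (N n.+1 - Imat (m n.+1) (m n) *m N n).
  by apply/funext => i; rewrite extendB extend_Imat_mulmx.
exact: trunc_norm_extend_le.
Qed.

Lemma vnorm_network_succ_le n :
  vnorm p (N n.+1) <= (1 + opnorm p (P n)) * vnorm p (N n) + vnorm p (b n).
Proof.
have -> : N n.+1 = Imat (m n.+1) (m n) *m N n + (N n.+1 - Imat (m n.+1) (m n) *m N n).
  by rewrite addrC subrK.
apply: le_trans (vnormD_le p_ge1 _ _) _.
rewrite (vnorm_extend p_ge1 _ _ (extend_Imat_mulmx _ (m_mono n))).
by have := vnorm_layer_increment_le n; rewrite mulrDl mul1r; lra.
Qed.

Lemma vnorm_network_le {CP Cb} :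
  (forall n, \sum_(0 <= k < n) opnorm p (P k) <= CP) ->
  (forall n, \sum_(0 <= k < n) vnorm p (b k) <= Cb) ->
  forall n, vnorm p (N n) <= (vnorm p x + Cb) * expR CP.
Proof.
move=> CP_ub Cb_ub n; apply: le_trans (discrete_gronwall (fun k => vnorm p (N k))
  (fun k => opnorm p (P k)) (fun k => vnorm p (b k)) _ _ _ _ n) _.
- exact: vnorm_ge0.
- by move=> k; exact: opnorm_ge0.
- by move=> k; exact: vnorm_ge0.
- exact: vnorm_network_succ_le.
apply: ler_pM; rewrite ?expR_ge0 ?ler_expR ?lerD2l //.
by rewrite addr_ge0 ?vnorm_ge0 // sumr_ge0 // => k _; rewrite vnorm_ge0.
Qed.

End relu_network.

Theorem theorem5p2 (R : realType) (p : \bar R) (m : nat -> nat)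
  (W : forall n, 'M[R]_(m n.+1, m n)) (b : forall n, 'cV[R]_(m n.+1))
  (P : forall n, 'M[R]_(m n.+1, m n)) :
  (1 <= p)%E ->
  (forall n, (0 < m n.+1)%N) ->
  (forall n, (m n <= m n.+1)%N) ->
  (forall n, W n = Imat (m n.+1) (m n) + P n) ->
  (\sum_(0 <= n <oo) ((opnorm p (P n))%:E) < +oo)%E ->
  (\sum_(0 <= n <oo) ((vnorm p (b n))%:E) < +oo)%E ->
  forall x : 'cV[R]_(m 0%N), (forall i, 0 <= x i 0 <= 1) ->
  exists y : nat -> R, (lpnorm p y < +oo)%E /\
    ((fun n => lpnorm p (fun i => extend (network W b x n) i - y i)) @ \oo
       --> 0%E).
Proof.
move=> p_ge1 _ m_mono W_def P_sum b_sum x x01.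
have x_ge0 i : 0 <= x i 0 by case/andP: (x01 i).
have [CP CP_ub] := lty_nneseries_bounded _ (fun n => opnorm_ge0 p_ge1 (P n)) P_sum.
have [Cb Cb_ub] := lty_nneseries_bounded _ (fun n => vnorm_ge0 p_ge1 (b n)) b_sum.
have [M M0 N_le] : exists2 M, 0 <= M & forall n, vnorm p (network W b x n) <= M.
  have N_le := vnorm_network_le p_ge1 m_mono W_def x_ge0 CP_ub Cb_ub.
  by exists ((vnorm p x + Cb) * expR CP) => //; exact: le_trans (vnorm_ge0 p_ge1 _) (N_le 0%N).
apply: (summable_increments_lp_cvg p_ge1 _ (fun n => opnorm p (P n) * M + vnorm p (b n))
  (vnorm p x) (CP * M + Cb)) => [n | n | K | n K].
- by rewrite addr_ge0 ?mulr_ge0 ?vnorm_ge0 ?opnorm_ge0.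
- by rewrite big_split /= -mulr_suml lerD ?ler_wpM2r.
- exact: trunc_norm_extend_le.
apply: le_trans (trunc_norm_network_increment_le p_ge1 m_mono W_def x_ge0 n K) _.
by rewrite lerD2r ler_wpM2l ?opnorm_ge0.
Qed.
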